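(* Under the setting of the Jacobian formula ($\beta\in(0,1)$, $p\in(1,2]$, $\zeta>0$), the map $x\mapsto J(x)=-TB^\dagger K(x)B$ is Lipschitz continuous on $\mathbb{R}^n$ with respect to the Euclidean norm and the induced operator 2-norm: there exists $\xi\ge0$ with $\lVert J(x)-J(y)\rVert_2\le\xi\lVert x-y\rVert_2$ for all $x,y\in\mathbb{R}^n$.
   Context: $T=\beta D+D^{-1}L$ with $D$ the weighted degree matrix and $L=D-A$ the Laplacian of a simple connected weighted graph with $n$ vertices and $m\ge1$ edges; $B$ the incidence matrix, $B^\dagger$ its Moore–Penrose inverse; with $z=Bx$, $K(x)=\operatorname{diag}\big((z_i^2+\zeta)^{\frac12(p-2)}+(p-2)z_i^2(z_i^2+\zeta)^{\frac12(p-4)}\big)_{i=1}^m$. *)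

From HB Require Import structures.
From mathcomp Require Import all_boot all_order all_algebra.
From mathcomp Require Import all_classical all_reals all_analysis.
Set Implicit Arguments. Unset Strict Implicit. Unset Printing Implicit Defensive.
Import Order.TTheory GRing.Theory Num.Theory.
Local Open Scope ring_scope.
Local Open Scope classical_set_scope.

Section GraphDefs.
Variable R : realType.

(* A weighted graph on vertices 'I_n with edges 'I_m; edge e joins
   src e and tgt e (the orientation is arbitrary) with weight w e. *)
Variables (n m : nat) (src tgt : 'I_m -> 'I_n) (w : 'I_m -> R).

Definition edge_joins (e : 'I_m) (u v : 'I_n) : bool :=
  ((src e == u) && (tgt e == v)) || ((src e == v) && (tgt e == u)).

Definition simple_weighted_graph : Prop :=
  (forall e, src e != tgt e) /\
  (forall e1 e2, edge_joins e1 (src e2) (tgt e2) -> e1 = e2) /\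
  (forall e, 0 < w e).

Definition graph_rel : rel 'I_n := fun u v => [exists e, edge_joins e u v].

Definition graph_connected : Prop := forall u v, connect graph_rel u v.

Definition adjm : 'M[R]_n :=
  \matrix_(u, v) \sum_(e | edge_joins e u v) w e.
Definition degm : 'M[R]_n :=
  \matrix_(u, v) ((u == v)%:R * \sum_j adjm u j).
Definition laplm : 'M[R]_n := degm - adjm.

Definition incidm : 'M[R]_(m, n) :=
  \matrix_(e, u) ((src e == u)%:R - (tgt e == u)%:R).

Definition Tmat (beta : R) : 'M[R]_n := beta *: degm + invmx degm *m laplm.

Definition Kmat (p zeta : R) (x : 'cV[R]_n) : 'M[R]_m :=
  let z := incidm *m x in
  diag_mx (\row_i ((z i 0 ^+ 2 + zeta) `^ ((p - 2) / 2)
                   + (p - 2) * z i 0 ^+ 2 * (z i 0 ^+ 2 + zeta) `^ ((p - 4) / 2))).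

Definition Jmat (beta p zeta : R) (Bd : 'M[R]_(n, m)) (x : 'cV[R]_n) : 'M[R]_n :=
  - (Tmat beta *m Bd *m Kmat p zeta x *m incidm).

End GraphDefs.

(* Moore-Penrose inverse, characterized by the four Penrose equations
   (which determine it uniquely). *)
Definition is_pinv (R : realType) (k l : nat) (M : 'M[R]_(k, l)) (Md : 'M[R]_(l, k)) : Prop :=
  [/\ M *m Md *m M = M, Md *m M *m Md = Md,
      (M *m Md)^T = M *m Md & (Md *m M)^T = Md *m M].

Definition vnorm2 (R : realType) (k : nat) (v : 'cV[R]_k) : R :=
  Num.sqrt (\sum_i v i 0 ^+ 2).

Definition opnorm2 (R : realType) (k l : nat) (M : 'M[R]_(k, l)) : R :=
  sup [set vnorm2 (M *m v) | v in [set v : 'cV[R]_l | vnorm2 v <= 1]].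

From HB Require Import structures.
From mathcomp Require Import all_boot all_order all_algebra.
From mathcomp Require Import all_classical all_reals all_analysis.
From mathcomp Require Import ring lra.
Set Implicit Arguments. Unset Strict Implicit. Unset Printing Implicit Defensive.
Import Order.TTheory GRing.Theory Num.Theory.
Local Open Scope ring_scope.

(* With N(a) = sqrt(a^2 + zeta) >= sqrt zeta, the diagonal entry of K(x) is
   k(a) = (p - 1) N(a)^(p-2) - (p - 2) zeta N(a)^(p-4).  N is 1-Lipschitz and
   s |-> s^q (q <= 0) is Lipschitz on [sqrt zeta, +oo), so k is globally
   Lipschitz.  Then J(x) - J(y) = - T B^dagger diag(k(Bx) - k(By)) B, and the
   operator 2-norm is dominated by the entrywise l1 norm, which is
   submultiplicative. *)

Section NonpositivePower.
Variable R : realType.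
Implicit Types c q s t : R.

Lemma gt0_powRE s q : 0 < s -> s `^ q = expR (q * ln s).
Proof. by move=> s0; rewrite /powR gt_eqF. Qed.

Lemma le0_ger_powR q s t : q <= 0 -> 0 < s -> s <= t -> t `^ q <= s `^ q.
Proof.
move=> q0 s0 st; have t0 : 0 < t by apply: lt_le_trans st.
by rewrite !gt0_powRE // ler_expR ler_wnM2l // ler_ln ?posrE.
Qed.

(* The tangent-line bound [expR x >= 1 + x] at [x = q ln (t/s)], followed by
   [ln x <= x - 1]. *)
Lemma le0_powR_subr q s t : q <= 0 -> 0 < s -> s <= t ->
  s `^ q - t `^ q <= - q * s `^ (q - 1) * (t - s).
Proof.
move=> q0 s0 st; have t0 : 0 < t by apply: lt_le_trans st.
have ts0 : 0 < t / s by rewrite divr_gt0.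
have tsq : t `^ q = s `^ q * (t / s) `^ q.
  by rewrite -powRM ?ltW // mulrC divfK ?gt_eqF.
have ln_le : ln (t / s) <= t / s - 1.
  by rewrite -[X in ln X](subrK 1) addrC le_ln1Dx // ltrBrDl subrr.
have ratio_ge : 1 + q * (t / s - 1) <= (t / s) `^ q.
  rewrite gt0_powRE //; apply: le_trans (expR_ge1Dx _).
  by rewrite lerD2l ler_wnM2l.
have sq0 : 0 <= s `^ q by exact: powR_ge0.
rewrite tsq powRB ?(powRr1 (ltW s0)); last by rewrite (gt_eqF s0) implybT.
have -> : - q * (s `^ q / s) * (t - s) = s `^ q * (- q * (t / s - 1)).
  by field; rewrite gt_eqF.
rewrite -[X in X - _]mulr1 -mulrBr ler_wpM2l //; lra.
Qed.

Lemma le0_powR_lipschitz q c s t : q <= 0 -> 0 < c -> c <= s -> c <= t ->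
  `|s `^ q - t `^ q| <= - q * c `^ (q - 1) * `|s - t|.
Proof.
move=> q0 c0; wlog st : s t / s <= t => [hwlog cs ct|cs ct].
  have [st|ts] := leP s t; first exact: hwlog st cs ct.
  by rewrite (distrC (s `^ q)) (distrC s); apply: hwlog (ltW ts) ct cs.
have s0 : 0 < s by apply: lt_le_trans cs.
have tqs : t `^ q <= s `^ q by exact: le0_ger_powR.
rewrite ger0_norm ?subr_ge0 // distrC ger0_norm ?subr_ge0 //.
apply: le_trans (le0_powR_subr q0 s0 st) _.
rewrite ler_wpM2r ?subr_ge0 // ler_wpM2l ?oppr_ge0 //.
by apply: le0_ger_powR => //; lra.
Qed.

End NonpositivePower.

Section SmoothAbs.
Variables (R : realType) (zeta : R).
Hypothesis zeta_gt0 : 0 < zeta.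

Definition smooth_abs (a : R) : R := Num.sqrt (a ^+ 2 + zeta).

Lemma sqrt_zeta_le_smooth_abs a : Num.sqrt zeta <= smooth_abs a.
Proof. by rewrite ler_wsqrtr // lerDr sqr_ge0. Qed.

Lemma smooth_abs_gt0 a : 0 < smooth_abs a.
Proof. by apply: lt_le_trans (sqrt_zeta_le_smooth_abs a); rewrite sqrtr_gt0. Qed.

Lemma smooth_abs_sqr a : smooth_abs a ^+ 2 = a ^+ 2 + zeta.
Proof. by rewrite sqr_sqrtr // addr_ge0 ?sqr_ge0 ?ltW. Qed.

Lemma smooth_abs_lipschitz a b : `|smooth_abs a - smooth_abs b| <= `|a - b|.
Proof.
have sum_gt0 : 0 < smooth_abs a + smooth_abs b by rewrite addr_gt0 ?smooth_abs_gt0.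
have abs_le c : `|c| <= smooth_abs c.
  by rewrite -sqrtr_sqr ler_wsqrtr // lerDl ltW.
have diff : (smooth_abs a - smooth_abs b) * (smooth_abs a + smooth_abs b)
          = (a - b) * (a + b).
  by rewrite -subr_sqr !smooth_abs_sqr; ring.
rewrite -(ler_pM2r sum_gt0).
have -> : `|smooth_abs a - smooth_abs b| * (smooth_abs a + smooth_abs b)
        = `|(a - b) * (a + b)| by rewrite -diff normrM (gtr0_norm sum_gt0).
rewrite normrM ler_wpM2l //.
by apply: le_trans (ler_normD _ _) _; exact: lerD.
Qed.

Lemma powR_sqrD_half (q a : R) : (a ^+ 2 + zeta) `^ (q / 2) = smooth_abs a `^ q.
Proof.
by rewrite /smooth_abs -powR12_sqrt ?addr_ge0 ?sqr_ge0 ?ltW // -powRrM mulrC.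
Qed.

Lemma le0_powR_smooth_abs_lipschitz q a b : q <= 0 ->
  `|smooth_abs a `^ q - smooth_abs b `^ q|
    <= - q * Num.sqrt zeta `^ (q - 1) * `|a - b|.
Proof.
move=> q0.
have sqrt_zeta_gt0 : 0 < Num.sqrt zeta by rewrite sqrtr_gt0.
apply: le_trans (le0_powR_lipschitz q0 sqrt_zeta_gt0
                   (sqrt_zeta_le_smooth_abs a) (sqrt_zeta_le_smooth_abs b)) _.
apply: ler_wpM2l; last exact: smooth_abs_lipschitz.
by rewrite mulr_ge0 ?powR_ge0 ?oppr_ge0.
Qed.

End SmoothAbs.

Section KDiagonal.
Variables (R : realType) (p zeta : R).
Hypotheses (p_le2 : p <= 2) (zeta_gt0 : 0 < zeta).

Definition kdiag (a : R) : R :=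
  (a ^+ 2 + zeta) `^ ((p - 2) / 2)
  + (p - 2) * a ^+ 2 * (a ^+ 2 + zeta) `^ ((p - 4) / 2).

Lemma kdiag_smooth_abs a : kdiag a =
  (p - 1) * smooth_abs zeta a `^ (p - 2)
  - (p - 2) * zeta * smooth_abs zeta a `^ (p - 4).
Proof.
rewrite /kdiag !powR_sqrD_half //.
have sa_gt0 := smooth_abs_gt0 zeta_gt0 a.
have -> : smooth_abs zeta a `^ (p - 2)
        = smooth_abs zeta a `^ (p - 4) * (a ^+ 2 + zeta).
  rewrite -smooth_abs_sqr // -(powR_mulrn 2 (ltW sa_gt0)) -powRD;
    last by rewrite (gt_eqF sa_gt0) implybT.
  by have -> : p - 4 + 2 = p - 2 by ring.
ring.
Qed.

Lemma kdiag_lipschitz :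
  exists2 L, 0 <= L & forall a b, `|kdiag a - kdiag b| <= L * `|a - b|.
Proof.
have q1_le0 : p - 2 <= 0 by rewrite subr_le0.
have q2_le0 : p - 4 <= 0 by rewrite subr_le0 (le_trans p_le2) ?ler_nat.
pose k q := - q * Num.sqrt zeta `^ (q - 1).
have k_ge0 q : q <= 0 -> 0 <= k q by move=> q0; rewrite mulr_ge0 ?powR_ge0 ?oppr_ge0.
exists (`|p - 1| * k (p - 2) + `|p - 2| * zeta * k (p - 4)).
  by apply: addr_ge0; apply: mulr_ge0; rewrite ?k_ge0 ?mulr_ge0 // ltW.
move=> a b; rewrite !kdiag_smooth_abs.
have h1 := le0_powR_smooth_abs_lipschitz zeta_gt0 a b q1_le0.
have h2 := le0_powR_smooth_abs_lipschitz zeta_gt0 a b q2_le0.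
set u1 := smooth_abs zeta a `^ (p - 2) in h1 *.
set v1 := smooth_abs zeta b `^ (p - 2) in h1 *.
set u2 := smooth_abs zeta a `^ (p - 4) in h2 *.
set v2 := smooth_abs zeta b `^ (p - 4) in h2 *.
have -> : (p - 1) * u1 - (p - 2) * zeta * u2 - ((p - 1) * v1 - (p - 2) * zeta * v2)
        = (p - 1) * (u1 - v1) - (p - 2) * zeta * (u2 - v2) by ring.
apply: le_trans (ler_normB _ _) _.
rewrite !normrM (gtr0_norm zeta_gt0) mulrDl.
apply: lerD; first by rewrite -[X in _ <= X]mulrA ler_wpM2l.
by rewrite -mulrA -[X in _ <= X]mulrA -[X in _ <= X]mulrA !ler_wpM2l // ltW.
Qed.

End KDiagonal.

Section EntrywiseL1.
Variable R : realType.

Definition mx_l1 k l (M : 'M[R]_(k, l)) : R := \sum_i \sum_j `|M i j|.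

Lemma mx_l1_ge0 k l (M : 'M[R]_(k, l)) : 0 <= mx_l1 M.
Proof. by apply: sumr_ge0 => i _; apply: sumr_ge0. Qed.

Lemma mx_l1N k l (M : 'M[R]_(k, l)) : mx_l1 (- M) = mx_l1 M.
Proof. by apply: eq_bigr => i _; apply: eq_bigr => j _; rewrite mxE normrN. Qed.

Lemma mx_l1_cV k (u : 'cV[R]_k) : mx_l1 u = \sum_i `|u i 0|.
Proof. by apply: eq_bigr => i _; rewrite big_ord1. Qed.

Lemma row_l1_le_mx_l1 k l (M : 'M[R]_(k, l)) i : \sum_j `|M i j| <= mx_l1 M.
Proof.
by rewrite /mx_l1 (bigD1 i) //= lerDl; apply: sumr_ge0 => i' _; apply: sumr_ge0.
Qed.

Lemma vnorm2_coord_le k (u : 'cV[R]_k) i : `|u i 0| <= vnorm2 u.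
Proof.
rewrite /vnorm2 -sqrtr_sqr ler_wsqrtr //.
by rewrite (bigD1 i) //= lerDl; apply: sumr_ge0 => j _; exact: sqr_ge0.
Qed.

Lemma vnorm2_le_mx_l1 k (u : 'cV[R]_k) : vnorm2 u <= mx_l1 u.
Proof.
rewrite /vnorm2 -(ger0_norm (mx_l1_ge0 u)) -sqrtr_sqr ler_wsqrtr //.
rewrite mx_l1_cV expr2 big_distrl /=; apply: ler_sum => i _.
rewrite -real_normK ?num_real // expr2 ler_wpM2l //.
by rewrite (bigD1 i) //= lerDl; apply: sumr_ge0.
Qed.

Lemma mx_l1_mulmx_cV k l (M : 'M[R]_(k, l)) (u : 'cV[R]_l) :
  mx_l1 (M *m u) <= mx_l1 M * vnorm2 u.
Proof.
rewrite mx_l1_cV /mx_l1 big_distrl /=; apply: ler_sum => i _.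
rewrite mxE big_distrl /=; apply: le_trans (ler_norm_sum _ _ _) _.
by apply: ler_sum => j _; rewrite normrM ler_wpM2l ?vnorm2_coord_le.
Qed.

Lemma vnorm2_mulmx k l (M : 'M[R]_(k, l)) (u : 'cV[R]_l) :
  vnorm2 (M *m u) <= mx_l1 M * vnorm2 u.
Proof. exact: le_trans (vnorm2_le_mx_l1 _) (mx_l1_mulmx_cV _ _). Qed.

Lemma mx_l1_mulmx k l r (M : 'M[R]_(k, l)) (N : 'M[R]_(l, r)) :
  mx_l1 (M *m N) <= mx_l1 M * mx_l1 N.
Proof.
rewrite /mx_l1 big_distrl /=; apply: ler_sum => i _.
apply: (@le_trans _ _ (\sum_j \sum_h `|M i h| * `|N h j|)).
  apply: ler_sum => j _; rewrite mxE; apply: le_trans (ler_norm_sum _ _ _) _.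
  by apply: ler_sum => h _; rewrite normrM.
rewrite exchange_big big_distrl /=; apply: ler_sum => h _.
by rewrite -mulr_sumr ler_wpM2l // row_l1_le_mx_l1.
Qed.

Lemma mx_l1_diag_mx k (d : 'rV[R]_k) : mx_l1 (diag_mx d) = \sum_i `|d 0 i|.
Proof.
apply: eq_bigr => i _; rewrite (bigD1 i) //= big1 ?addr0 => [|j /negbTE ji].
  by rewrite mxE eqxx mulr1n.
by rewrite mxE eq_sym ji mulr0n normr0.
Qed.

Lemma opnorm2_le_mx_l1 k l (M : 'M[R]_(k, l)) : opnorm2 M <= mx_l1 M.
Proof.
apply: ge_sup.
  exists (vnorm2 (M *m 0)), 0 => //=.
  by rewrite /vnorm2 big1 ?sqrtr0 // => i _; rewrite mxE expr0n.
move=> _ [v /= v_le1 <-]; apply: le_trans (vnorm2_mulmx M v) _.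
by rewrite -[X in _ <= X]mulr1 ler_wpM2l ?mx_l1_ge0.
Qed.

End EntrywiseL1.

Lemma mx_l1_diag_lipschitz (R : realType) k (f : R -> R) (L : R) (u v : 'cV[R]_k) :
  (forall a b, `|f a - f b| <= L * `|a - b|) ->
  mx_l1 (diag_mx (\row_i (f (u i 0) - f (v i 0)))) <= L * mx_l1 (u - v).
Proof.
move=> f_lip; rewrite mx_l1_diag_mx mx_l1_cV mulr_sumr; apply: ler_sum => i _.
by rewrite !mxE f_lip.
Qed.

Lemma Jmat_sub (R : realType) n m (src tgt : 'I_m -> 'I_n) (w : 'I_m -> R)
    (beta p zeta : R) (Bd : 'M[R]_(n, m)) (x y : 'cV[R]_n) :
  let B := incidm R src tgt in
  Jmat src tgt w beta p zeta Bd x - Jmat src tgt w beta p zeta Bd y =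
  - (Tmat src tgt w beta *m Bd
     *m diag_mx (\row_i (kdiag p zeta ((B *m x) i 0) - kdiag p zeta ((B *m y) i 0)))
     *m B).
Proof.
move=> B; have -> : diag_mx (\row_i (kdiag p zeta ((B *m x) i 0)
                                     - kdiag p zeta ((B *m y) i 0)))
                  = Kmat src tgt p zeta x - Kmat src tgt p zeta y.
  by apply/matrixP => i j; rewrite !mxE -mulrnBl.
by rewrite mulmxBr mulmxBl opprB /Jmat opprK addrC.
Qed.

Theorem mainTheorem11 (R : realType) (n m : nat)
  (src tgt : 'I_m -> 'I_n) (w : 'I_m -> R) (beta p zeta : R)
  (Bd : 'M[R]_(n, m)) :
  (0 < m)%N ->
  simple_weighted_graph src tgt w ->
  graph_connected src tgt ->
  0 < beta < 1 -> 1 < p <= 2 -> 0 < zeta ->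
  is_pinv (incidm R src tgt) Bd ->
  exists xi : R, 0 <= xi /\
    forall x y : 'cV[R]_n,
      opnorm2 (Jmat src tgt w beta p zeta Bd x - Jmat src tgt w beta p zeta Bd y)
        <= xi * vnorm2 (x - y).
Proof.
move=> _ _ _ _ /andP[_ p_le2] zeta_gt0 _.
set B := incidm R src tgt; set A := Tmat src tgt w beta *m Bd.
have [L L_ge0 kdiag_lip] := kdiag_lipschitz p_le2 zeta_gt0.
exists (mx_l1 A * (L * mx_l1 B) * mx_l1 B).
split; first by rewrite !mulr_ge0 ?mx_l1_ge0.
move=> x y; rewrite Jmat_sub; apply: le_trans (opnorm2_le_mx_l1 _) _.
rewrite mx_l1N; apply: le_trans (mx_l1_mulmx _ _) _.
rewrite [X in _ <= X]mulrAC ler_wpM2r ?mx_l1_ge0 //.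
apply: le_trans (mx_l1_mulmx _ _) _; rewrite -mulrA ler_wpM2l ?mx_l1_ge0 //.
apply: le_trans (mx_l1_diag_lipschitz _ _ kdiag_lip) _.
by rewrite -mulmxBr -mulrA ler_wpM2l // mx_l1_mulmx_cV.
Qed.
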